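(* Let $C_{n_1},C_{n_2},\dots,C_{n_k}$ be any finite sequence of nested commutators, where $C_{n_j}$ is a grade-$n_j$ commutator $[U_{n_j},[U_{n_j-1},\dots,[U_2,U_1]\dots]]$ with each $U_i$ equal to $h\partial_x^2$ or $h^{-1}V(x)$ ($V$ smooth), and let $O_q=y_q(x)h^q\partial_x^q$ with $y_q$ smooth. Define $$W_k=[C_{n_k},[C_{n_{k-1}},\dots,[C_{n_1},O_q]\dots]].$$ Then $\mathrm{ht}(W_k)\le\mathrm{wd}(W_k)$.
   Context: $\mathcal{L}_h$ is the set of differential operators $\sum_{k=0}^n y_k(x)h^{m_k}\partial_x^{d_k}$ ($n,d_k\in\mathbb{N}$, $m_k\in\mathbb{Z}$, $y_k$ smooth). For $P\in\mathcal{L}_h$: $\mathrm{ht}(P)=\max\{d: h^m\partial_x^d\text{ appears in }P\}$, $\mathrm{wd}(P)=\min\{m: h^m\partial_x^d\text{ appears in }P\}$, with $\mathrm{ht}(0)=0$, $\mathrm{wd}(0)=\infty$. *)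

From Stdlib Require Import Reals ZArith List Arith ClassicalEpsilon.
From Coquelicot Require Import Coquelicot.
Import ListNotations.
Open Scope R_scope.

Definition smooth (f : R -> R) : Prop := forall (n : nat) (x : R), ex_derive_n f n x.

(** A monomial  y(x) h^m d_x^d  is encoded as (y, m, d). *)
Definition mono : Type := ((R -> R) * Z * nat)%type.

(** An element of L_h: a finite formal sum of monomials.  Terms with the same
    (m, d) are collected by [coef]. *)
Definition op : Type := list mono.

(** Product of monomials via the Leibniz rule:
    (y h^m d^d)(z h^n d^e) = h^(m+n) sum_{j<=d} C(d,j) y z^(j) d^(d-j+e). *)
Definition mono_mul (a b : mono) : op :=
  let '(y, m, d) := a in
  let '(z, n, e) := b in
  map (fun j => ((fun x => Binomial.C d j * y x * Derive_n z j x),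
                 (m + n)%Z, (d - j + e)%nat))
      (seq 0 (S d)).

Definition op_mul (P Q : op) : op :=
  flat_map (fun a => flat_map (fun b => mono_mul a b) Q) P.

Definition op_opp (P : op) : op :=
  map (fun '(y, m, d) => ((fun x => - y x), m, d)) P.

Definition comm (P Q : op) : op := op_mul P Q ++ op_opp (op_mul Q P).

Definition coef (P : op) (m : Z) (d : nat) (x : R) : R :=
  fold_right (fun '(y, m', d') acc =>
                if (Z.eqb m m' && Nat.eqb d d')%bool then y x + acc else acc)
             0 P.

Definition appears (P : op) (m : Z) (d : nat) : Prop := exists x, coef P m d x <> 0.

(** ht(P) = max{d : h^m d^d appears in P}, with ht(0) = 0. *)
Definition ht (P : op) : nat :=
  fold_right (fun '(_, m, d) acc =>
                if excluded_middle_informative (appears P m d)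
                then Nat.max d acc else acc) 0%nat P.

(** wd(P) = min{m : h^m d^d appears in P}; None encodes +infinity (wd(0)). *)
Definition wd (P : op) : option Z :=
  fold_right (fun '(_, m, d) acc =>
                if excluded_middle_informative (appears P m d)
                then match acc with
                     | None => Some m
                     | Some w => Some (Z.min m w)
                     end
                else acc) None P.

Definition ht_le_wd (n : nat) (w : option Z) : Prop :=
  match w with None => True | Some w => (Z.of_nat n <= w)%Z end.

(** The generators: true ↦ h d_x^2, false ↦ h^{-1} V(x). *)
Definition U (V : R -> R) (b : bool) : op :=
  if b then [((fun _ => 1), 1%Z, 2%nat)] else [(V, (-1)%Z, 0%nat)].

(** Nested commutator [U_n,[U_{n-1},...,[U_2,U_1]...]] from the list
    [U_1; U_2; ...; U_n] (given as booleans). *)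
Definition nested_comm (V : R -> R) (us : list bool) : op :=
  match us with
  | [] => []
  | u1 :: rest => fold_left (fun acc b => comm (U V b) acc) rest (U V u1)
  end.

Definition Oq (q : nat) (yq : R -> R) : op := [(yq, Z.of_nat q, q)].

(** W_k = [C_{n_k},[C_{n_{k-1}},...,[C_{n_1},O_q]...]], with Cs = [C_1;...;C_k]. *)
Definition Wk (V : R -> R) (Cs : list (list bool)) (q : nat) (yq : R -> R) : op :=
  fold_left (fun W us => comm (nested_comm V us) W) Cs (Oq q yq).

(* Call Z.of_nat d - m the excess of y h^m d_x^d.  In the Leibniz product of two
   monomials, the term in which j derivatives fall on the right factor has h-degree the
   sum of the h-degrees and excess the sum of the excesses minus j.  Only the j = 0 terms
   keep the full excess, and those of PQ and of QP coincide, so they cancel in [P, Q].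
   Hence if P and Q are, up to pairs of opposite terms, homogeneous in h with excess at
   most K1 and K2, then so is [P, Q] with excess at most K1 + K2 - 1.  The generators
   h d_x^2 and h^-1 V have excess 1, so every nested commutator has excess at most 1;
   O_q has excess 0 and commuting with the C_{n_j} keeps it at most 0, which for an
   operator homogeneous of h-degree M says ht <= M = wd.
   The cancellation is tracked syntactically, up to permutation of the formal sum. *)

From Stdlib Require Import Reals ZArith List Permutation Morphisms Lia Lra
  FunctionalExtensionality ClassicalEpsilon.
From Coquelicot Require Import Rcomplements Derive.
Import ListNotations.
Open Scope R_scope.

Lemma flat_map_perm_ext {A B} (f g : A -> list B) (l : list A) :
  (forall a, Permutation (f a) (g a)) -> Permutation (flat_map f l) (flat_map g l).
Proof. intros H; induction l; simpl; auto using Permutation_app. Qed.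

Lemma flat_map_app_perm {A B} (f g : A -> list B) (l : list A) :
  Permutation (flat_map (fun a => f a ++ g a) l) (flat_map f l ++ flat_map g l).
Proof.
  induction l as [|a l IH]; simpl; auto.
  rewrite <- !app_assoc. apply Permutation_app_head.
  rewrite IH, !app_assoc. apply Permutation_app_tail, Permutation_app_comm.
Qed.

Lemma flat_map_cons_perm {A B} (f : A -> B) (g : A -> list B) (l : list A) :
  Permutation (flat_map (fun a => f a :: g a) l) (map f l ++ flat_map g l).
Proof.
  induction l as [|a l IH]; simpl; auto.
  apply perm_skip. rewrite IH. apply Permutation_app_swap_app.
Qed.

Lemma flat_map_map_swap_perm {A B C} (f : A -> B -> C) (l1 : list A) (l2 : list B) :
  Permutation (flat_map (fun a => map (f a) l2) l1)
              (flat_map (fun b => map (fun a => f a b) l1) l2).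
Proof.
  induction l1 as [|a l1 IH]; simpl.
  - induction l2; simpl; auto.
  - rewrite IH. symmetry. apply flat_map_cons_perm.
Qed.

Lemma perm_app_transpose {A} (l1 l2 l3 l4 : list A) :
  Permutation ((l1 ++ l2) ++ (l3 ++ l4)) ((l1 ++ l3) ++ (l2 ++ l4)).
Proof.
  rewrite <- !app_assoc. apply Permutation_app_head.
  rewrite !app_assoc. apply Permutation_app_tail, Permutation_app_comm.
Qed.

#[local] Instance op_mul_perm :
  Proper (@Permutation mono ==> @Permutation mono ==> @Permutation mono) op_mul.
Proof.
  intros P P' HP Q Q' HQ. unfold op_mul. rewrite HP.
  apply flat_map_perm_ext. intros a. now apply Permutation_flat_map.
Qed.

#[local] Instance op_opp_perm : Proper (@Permutation mono ==> @Permutation mono) op_opp.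
Proof. intros P P' HP. now apply Permutation_map. Qed.

Lemma op_mul_app_l (P P' Q : op) : op_mul (P ++ P') Q = op_mul P Q ++ op_mul P' Q.
Proof. apply flat_map_app. Qed.

Lemma op_mul_app_r (P Q Q' : op) :
  Permutation (op_mul P (Q ++ Q')) (op_mul P Q ++ op_mul P Q').
Proof.
  unfold op_mul. rewrite <- flat_map_app_perm.
  apply flat_map_perm_ext. intros a. now rewrite flat_map_app.
Qed.

Lemma op_opp_app (P Q : op) : op_opp (P ++ Q) = op_opp P ++ op_opp Q.
Proof. apply map_app. Qed.

Lemma op_opp_flat_map {A} (f : A -> op) (l : list A) :
  op_opp (flat_map f l) = flat_map (fun a => op_opp (f a)) l.
Proof. induction l; simpl; auto. now rewrite op_opp_app, IHl. Qed.

Lemma op_opp_involutive (P : op) : op_opp (op_opp P) = P.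
Proof.
  induction P as [|[[y m] d] P IH]; simpl; auto.
  replace (fun x => - - y x) with y by (apply functional_extensionality; intros; lra).
  now rewrite IH.
Qed.

Lemma mono_mul_opp_l (y : R -> R) (m : Z) (d : nat) (b : mono) :
  mono_mul ((fun x => - y x), m, d) b = op_opp (mono_mul (y, m, d) b).
Proof.
  destruct b as [[z n] e]. unfold mono_mul, op_opp. rewrite map_map. apply map_ext.
  intros j. do 2 f_equal. apply functional_extensionality; intros; lra.
Qed.

Lemma mono_mul_opp_r (a : mono) (z : R -> R) (n : Z) (e : nat) :
  mono_mul a ((fun x => - z x), n, e) = op_opp (mono_mul a (z, n, e)).
Proof.
  destruct a as [[y m] d]. unfold mono_mul, op_opp. rewrite map_map. apply map_ext.
  intros j. do 2 f_equal. apply functional_extensionality; intros x.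
  rewrite Derive_n_opp. lra.
Qed.

Lemma op_mul_opp_l (P Q : op) : op_mul (op_opp P) Q = op_opp (op_mul P Q).
Proof.
  unfold op_mul. rewrite op_opp_flat_map.
  induction P as [|[[y m] d] P IH]; simpl; auto. f_equal; auto.
  rewrite op_opp_flat_map. apply flat_map_ext. intros b. apply mono_mul_opp_l.
Qed.

Lemma op_mul_opp_r (P Q : op) : op_mul P (op_opp Q) = op_opp (op_mul P Q).
Proof.
  unfold op_mul. rewrite op_opp_flat_map. apply flat_map_ext. intros a.
  rewrite op_opp_flat_map.
  induction Q as [|[[z n] e] Q IH]; simpl; auto. f_equal; auto. apply mono_mul_opp_r.
Qed.

Definition cancelling (N : op) : Prop := exists L, Permutation N (L ++ op_opp L).

Lemma cancelling_app (N N' : op) : cancelling N -> cancelling N' -> cancelling (N ++ N').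
Proof.
  intros [L HL] [L' HL']. exists (L ++ L').
  rewrite HL, HL', op_opp_app. apply perm_app_transpose.
Qed.

Lemma cancelling_opp (N : op) : cancelling N -> cancelling (op_opp N).
Proof.
  intros [L HL]. exists (op_opp L).
  rewrite HL, op_opp_app, op_opp_involutive. reflexivity.
Qed.

Lemma cancelling_mul_l (P N : op) : cancelling N -> cancelling (op_mul P N).
Proof.
  intros [L HL]. exists (op_mul P L).
  rewrite HL, op_mul_app_r, op_mul_opp_r. reflexivity.
Qed.

Lemma cancelling_mul_r (P N : op) : cancelling N -> cancelling (op_mul N P).
Proof.
  intros [L HL]. exists (op_mul L P).
  rewrite HL, op_mul_app_l, op_mul_opp_l. reflexivity.
Qed.

Definition cancels_to (P G : op) : Prop :=
  exists N, cancelling N /\ Permutation P (G ++ N).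

Lemma cancels_to_refl (P : op) : cancels_to P P.
Proof. exists []. split; [exists []; reflexivity | now rewrite app_nil_r]. Qed.

Lemma cancels_to_trans (P G H : op) :
  cancels_to P G -> cancels_to G H -> cancels_to P H.
Proof.
  intros [N [HN HP]] [N' [HN' HG]]. exists (N' ++ N).
  split; [now apply cancelling_app|]. now rewrite HP, HG, app_assoc.
Qed.

Lemma cancels_to_app (P P' G G' : op) :
  cancels_to P G -> cancels_to P' G' -> cancels_to (P ++ P') (G ++ G').
Proof.
  intros [N [HN HP]] [N' [HN' HP']]. exists (N ++ N').
  split; [now apply cancelling_app|]. rewrite HP, HP'. apply perm_app_transpose.
Qed.

Lemma cancels_to_opp (P G : op) : cancels_to P G -> cancels_to (op_opp P) (op_opp G).
Proof.
  intros [N [HN HP]]. exists (op_opp N).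
  split; [now apply cancelling_opp|]. now rewrite HP, op_opp_app.
Qed.

Lemma cancels_to_mul (P Q G H : op) :
  cancels_to P G -> cancels_to Q H -> cancels_to (op_mul P Q) (op_mul G H).
Proof.
  intros [N [HN HP]] [N' [HN' HQ]]. exists (op_mul G N' ++ op_mul N (H ++ N')).
  split.
  - apply cancelling_app; [now apply cancelling_mul_l | now apply cancelling_mul_r].
  - rewrite HP, HQ, op_mul_app_l, op_mul_app_r, app_assoc. reflexivity.
Qed.

Lemma cancels_to_comm (P Q G H : op) :
  cancels_to P G -> cancels_to Q H -> cancels_to (comm P Q) (comm G H).
Proof.
  intros HP HQ. apply cancels_to_app; [|apply cancels_to_opp]; now apply cancels_to_mul.
Qed.

Definition mono_mul_head (a b : mono) : mono :=
  let '(y, m, d) := a in let '(z, n, e) := b in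
  ((fun x => y x * z x), (m + n)%Z, (d + e)%nat).

Definition mono_mul_tail (a b : mono) : op :=
  let '(y, m, d) := a in let '(z, n, e) := b in
  map (fun j => ((fun x => Binomial.C d j * y x * Derive_n z j x),
                 (m + n)%Z, (d - j + e)%nat)) (seq 1 d).

Lemma mono_mul_head_tail (a b : mono) : mono_mul a b = mono_mul_head a b :: mono_mul_tail a b.
Proof.
  destruct a as [[y m] d], b as [[z n] e]. unfold mono_mul. simpl.
  rewrite Nat.sub_0_r.
  replace (fun x => Binomial.C d 0 * y x * z x) with (fun x => y x * z x); [reflexivity|].
  apply functional_extensionality; intros x. rewrite C_n_0. lra.
Qed.

Lemma mono_mul_head_comm (a b : mono) : mono_mul_head a b = mono_mul_head b a.
Proof.
  destruct a as [[y m] d], b as [[z n] e]. simpl.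
  rewrite Z.add_comm, Nat.add_comm.
  replace (fun x => y x * z x) with (fun x => z x * y x); [reflexivity|].
  apply functional_extensionality; intros x. lra.
Qed.

Definition op_mul_head (P Q : op) : op :=
  flat_map (fun a => map (mono_mul_head a) Q) P.

Definition op_mul_tail (P Q : op) : op :=
  flat_map (fun a => flat_map (mono_mul_tail a) Q) P.

Lemma op_mul_head_tail (P Q : op) :
  Permutation (op_mul P Q) (op_mul_head P Q ++ op_mul_tail P Q).
Proof.
  unfold op_mul, op_mul_head, op_mul_tail. rewrite <- flat_map_app_perm.
  apply flat_map_perm_ext. intros a.
  rewrite <- flat_map_cons_perm.
  apply Permutation_refl'. apply flat_map_ext. intros b. apply mono_mul_head_tail.
Qed.

Lemma op_mul_head_comm (P Q : op) : Permutation (op_mul_head Q P) (op_mul_head P Q).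
Proof.
  unfold op_mul_head. rewrite flat_map_map_swap_perm.
  apply Permutation_refl'. apply flat_map_ext. intros a.
  apply map_ext. intros b. apply mono_mul_head_comm.
Qed.

Lemma comm_cancels_to_tails (P Q : op) :
  cancels_to (comm P Q) (op_mul_tail P Q ++ op_opp (op_mul_tail Q P)).
Proof.
  exists (op_mul_head P Q ++ op_opp (op_mul_head P Q)).
  split; [eexists; reflexivity|]. unfold comm.
  rewrite !op_mul_head_tail, op_opp_app, (op_mul_head_comm P Q), perm_app_transpose.
  apply Permutation_app_comm.
Qed.

Definition graded (M K : Z) (G : op) : Prop :=
  Forall (fun a : mono => let '(_, m, d) := a in m = M /\ (Z.of_nat d - m <= K)%Z) G.

Lemma graded_opp (M K : Z) (G : op) : graded M K G -> graded M K (op_opp G).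
Proof.
  intros HG. apply Forall_map. eapply Forall_impl; [|exact HG]. now intros [[y m] d].
Qed.

Lemma graded_op_mul_tail (M1 K1 M2 K2 : Z) (P Q : op) :
  graded M1 K1 P -> graded M2 K2 Q -> graded (M1 + M2) (K1 + K2 - 1) (op_mul_tail P Q).
Proof.
  unfold graded, op_mul_tail. rewrite !Forall_forall. intros HP HQ c Hc.
  apply in_flat_map in Hc as [a [Ha Hc]]. apply in_flat_map in Hc as [b [Hb Hc]].
  specialize (HP a Ha). specialize (HQ b Hb).
  destruct a as [[y m] d], b as [[z n] e]. simpl in Hc.
  apply in_map_iff in Hc as [j [<- Hj]]. apply in_seq in Hj. lia.
Qed.

Definition excess_le (K : Z) (P : op) : Prop :=
  exists M G, cancels_to P G /\ graded M K G.

Lemma excess_le_comm (K1 K2 : Z) (P Q : op) :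
  excess_le K1 P -> excess_le K2 Q -> excess_le (K1 + K2 - 1) (comm P Q).
Proof.
  intros [M1 [G1 [HP HG1]]] [M2 [G2 [HQ HG2]]].
  exists (M1 + M2)%Z, (op_mul_tail G1 G2 ++ op_opp (op_mul_tail G2 G1)). split.
  - eapply cancels_to_trans; [apply cancels_to_comm; eassumption|].
    apply comm_cancels_to_tails.
  - apply Forall_app. split; [now apply graded_op_mul_tail|].
    apply graded_opp. rewrite (Z.add_comm M1), (Z.add_comm K1).
    now apply graded_op_mul_tail.
Qed.

Lemma excess_le_nil (K : Z) : excess_le K [].
Proof. exists 0%Z, []. split; [apply cancels_to_refl | constructor]. Qed.

Lemma excess_le_U (V : R -> R) (b : bool) : excess_le 1 (U V b).
Proof.
  exists (if b then 1 else -1)%Z, (U V b). split; [apply cancels_to_refl|].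
  destruct b; repeat constructor; lia.
Qed.

Lemma excess_le_Oq (q : nat) (y : R -> R) : excess_le 0 (Oq q y).
Proof.
  exists (Z.of_nat q), (Oq q y). split; [apply cancels_to_refl|].
  repeat constructor; lia.
Qed.

Lemma excess_le_nested_comm (V : R -> R) (us : list bool) : excess_le 1 (nested_comm V us).
Proof.
  destruct us as [|u us]; simpl; [apply excess_le_nil|].
  generalize (U V u) (excess_le_U V u).
  induction us as [|b us IH]; simpl; intros C HC; [exact HC|].
  apply IH. apply (excess_le_comm 1 1); [apply excess_le_U | exact HC].
Qed.

Lemma excess_le_Wk (V : R -> R) (Cs : list (list bool)) (q : nat) (y : R -> R) :
  excess_le 0 (Wk V Cs q y).
Proof.
  unfold Wk. generalize (Oq q y) (excess_le_Oq q y).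
  induction Cs as [|us Cs IH]; simpl; intros W HW; [exact HW|].
  apply IH. apply (excess_le_comm 1 0); [apply excess_le_nested_comm | exact HW].
Qed.

Lemma coef_app (P Q : op) (m : Z) (d : nat) (x : R) :
  coef (P ++ Q) m d x = coef P m d x + coef Q m d x.
Proof.
  induction P as [|[[y m'] d'] P IH]; simpl; [lra|].
  destruct (Z.eqb m m' && Nat.eqb d d')%bool; rewrite IH; lra.
Qed.

Lemma coef_opp (P : op) (m : Z) (d : nat) (x : R) : coef (op_opp P) m d x = - coef P m d x.
Proof.
  induction P as [|[[y m'] d'] P IH]; simpl; [lra|].
  destruct (Z.eqb m m' && Nat.eqb d d')%bool; rewrite IH; lra.
Qed.

Lemma coef_perm (P Q : op) (m : Z) (d : nat) (x : R) :
  Permutation P Q -> coef P m d x = coef Q m d x.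
Proof.
  induction 1 as [| [[y m'] d'] P Q _ IH | [[y m1] d1] [[z m2] d2] P | P Q S _ IH1 _ IH2];
    simpl.
  - reflexivity.
  - now rewrite IH.
  - destruct (Z.eqb m m1 && Nat.eqb d d1)%bool, (Z.eqb m m2 && Nat.eqb d d2)%bool; lra.
  - congruence.
Qed.

Lemma appears_cancels_to (P G : op) (m : Z) (d : nat) :
  cancels_to P G -> appears P m d -> appears G m d.
Proof.
  intros [N [[L HL] HP]] [x Hx]. exists x.
  rewrite (coef_perm _ _ m d x HP), coef_app, (coef_perm _ _ m d x HL), coef_app, coef_opp
    in Hx.
  lra.
Qed.

Lemma appears_graded (M K : Z) (G : op) (m : Z) (d : nat) :
  graded M K G -> appears G m d -> m = M /\ (Z.of_nat d - m <= K)%Z.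
Proof.
  intros HG [x Hx]. induction HG as [|[[y m'] d'] G Ha HG IH]; simpl in Hx; [lra|].
  destruct (Z.eqb m m' && Nat.eqb d d')%bool eqn:E; [|exact (IH Hx)].
  apply andb_prop in E as [->%Z.eqb_eq ->%Nat.eqb_eq]. exact Ha.
Qed.

Lemma ht_wd_folds_uniform (A : Z -> nat -> Prop) (M : Z) (l : op) :
  (forall m d, A m d -> m = M /\ (Z.of_nat d <= M)%Z) ->
  let h := fold_right (fun '((_, m, d) : mono) acc =>
             if excluded_middle_informative (A m d) then Nat.max d acc else acc) 0%nat l in
  let w := fold_right (fun '((_, m, d) : mono) acc =>
             if excluded_middle_informative (A m d)
             then match acc with None => Some m | Some w => Some (Z.min m w) end
             else acc) None l in
  (w = None /\ h = 0%nat) \/ (w = Some M /\ (Z.of_nat h <= M)%Z).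
Proof.
  intros HA. induction l as [|[[y m] d] l IH]; simpl; [now left|].
  destruct (excluded_middle_informative (A m d)) as [Ha|Ha]; [|exact IH].
  destruct (HA m d Ha) as [-> Hd]. right.
  destruct IH as [[-> ->]|[-> Hh]]; split; f_equal; lia.
Qed.

Lemma ht_le_wd_of_excess_le (P : op) : excess_le 0 P -> ht_le_wd (ht P) (wd P).
Proof.
  intros [M [G [HPG HG]]].
  assert (Hap : forall m d, appears P m d -> m = M /\ (Z.of_nat d <= M)%Z).
  { intros m d Hmd.
    destruct (appears_graded M 0 G m d HG (appears_cancels_to P G m d HPG Hmd)).
    split; [assumption | lia]. }
  destruct (ht_wd_folds_uniform (appears P) M P Hap) as [[Hw _]|[Hw Hh]].
  - change (wd P = None) in Hw. now rewrite Hw.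
  - change (wd P = Some M) in Hw. change (Z.of_nat (ht P) <= M)%Z in Hh. now rewrite Hw.
Qed.

Theorem theorem4p3 (V : R -> R) (hV : smooth V) (q : nat) (yq : R -> R)
  (hy : smooth yq) (Cs : list (list bool))
  (hCs : Forall (fun us => (2 <= length us)%nat) Cs) :
  ht_le_wd (ht (Wk V Cs q yq)) (wd (Wk V Cs q yq)).
Proof.
  apply ht_le_wd_of_excess_le, excess_le_Wk.
Qed.
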